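(* Suppose $\rho,\sigma\in\mathbb{C}^{d\times d}$ are quantum states with $D_H^2(\rho\|\sigma)\le\varepsilon$, where $0 < \varepsilon \le 2$. Then for $\sigma' = \Delta_{\varepsilon/2}(\sigma)$ we have $D_{KL}(\rho\|\sigma') \le 4\varepsilon\,(2 + \ln(2d/\varepsilon))$.
   Context: $D_H^2(\rho\|\sigma) = \mathrm{tr}((\sqrt\rho-\sqrt\sigma)^2)$. For $0\le\epsilon\le1$, $\Delta_\epsilon(\sigma) = (1-\epsilon)\sigma + \epsilon I/d$. $D_{KL}(\rho\|\sigma)=\mathrm{tr}(\rho(\ln\rho-\ln\sigma))$. *)

From HB Require Import structures.
From mathcomp Require Import all_boot all_order all_algebra.
From mathcomp Require Import sesquilinear spectral.
From mathcomp Require Import complex.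
From mathcomp Require Import reals exp.
Set Implicit Arguments. Unset Strict Implicit. Unset Printing Implicit Defensive.
Import Order.TTheory GRing.Theory Num.Theory.
Local Open Scope ring_scope.
Local Open Scope complex_scope.
Local Open Scope sesquilinear_scope.

Section QDefs.
Variable R : realType.
Local Notation C := R[i].

Definition adj d (A : 'M[C]_d) : 'M[C]_d := A ^t*.

Definition psd d (A : 'M[C]_d) : Prop :=
  adj A = A /\ forall v : 'rV[C]_d, 0 <= (v *m A *m v ^t*) 0 0.

Definition is_state d (A : 'M[C]_d) : Prop := psd A /\ \tr A = 1.

(* functional calculus for a Hermitian matrix A = U^* diag(l) U (spectral.v):
   f(A) := U^* diag(f(l)) U, with f : R -> R applied to the (real) eigenvalues *)
Definition mxfun (f : R -> R) d (A : 'M[C]_d) : 'M[C]_d :=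
  (spectralmx A) ^t* *m
    diag_mx (\row_i (f (complex.Re (spectral_diag A 0 i)))%:C) *m spectralmx A.

Definition mxsqrt d (A : 'M[C]_d) := mxfun (@Num.sqrt R) A.
(* matrix logarithm; uses ln 0 = 0 (mathcomp-analysis), i.e. the usual
   convention 0 ln 0 = 0 / log taken on the support *)
Definition mxln d (A : 'M[C]_d) := mxfun (@ln R) A.

Definition hellinger2 d (rho sigma : 'M[C]_d) : C :=
  \tr ((mxsqrt rho - mxsqrt sigma) *m (mxsqrt rho - mxsqrt sigma)).

Definition depol d (eps : R) (sigma : 'M[C]_d) : 'M[C]_d :=
  (1 - eps)%:C *: sigma + (eps / d%:R)%:C *: 1%:M.

Definition DKL d (rho sigma : 'M[C]_d) : C :=
  \tr (rho *m (mxln rho - mxln sigma)).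

End QDefs.

(* Diagonalize rho = P^H diag(p) P and sigma = Q^H diag(s) Q.  Then
   Delta_{eps/2}(sigma) = Q^H diag(q) Q with q_j = (1 - eps/2) s_j + eps/(2d), and
   every trace tr(f(rho) g(Delta_{eps/2}(sigma))) is sum_ij c_ij f(p_i) g(q_j),
   where c_ij = |(P Q^H)_ij|^2 is doubly stochastic, so the claim is classical.
   As p_i <= 1 <= M q_j for M = 2d/eps, the scalar bound
   t ln t - t + 1 <= K (sqrt t - 1)^2 on [0, M], with K = 16/3 + 8/3 ln M,
   gives p ln(p/q) - p + q <= K (sqrt p - sqrt q)^2 termwise, and summing
   against c yields D_KL <= K (2 - 2F) with F = sum_ij c_ij sqrt(p_i q_j).
   Finally F >= sqrt(1 - eps/2) (1 - eps/2) by the Hellinger hypothesis, and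
   2 - 2 (1 - x)^(3/2) <= 3x turns K (2 - 2F) into 4 eps (2 + ln M). *)

From HB Require Import structures.
From mathcomp Require Import all_boot all_order all_algebra.
From mathcomp Require Import sesquilinear spectral.
From mathcomp Require Import complex.
From mathcomp Require Import reals exp.
From mathcomp Require Import ring lra.
Import Order.TTheory GRing.Theory Num.Theory.
Local Open Scope ring_scope.
Local Open Scope complex_scope.

Section ClassicalBound.
Local Set Implicit Arguments. Local Unset Strict Implicit.
Variable R : realType.
Implicit Types (M p q t w x y : R).

Lemma ln_le_subr1 x : 0 < x -> ln x <= x - 1.
Proof.
by move=> x_gt0; have := @le_ln1Dx R (x - 1); rewrite [1 + _]addrC subrK; apply; lra.
Qed.

Lemma quartic_relent_le w : 0 <= w -> w ^+ 2 <= 3 ->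
  w ^+ 4 * ln (w ^+ 4) - w ^+ 4 + 1 <= 5 * (w ^+ 2 - 1) ^+ 2.
Proof.
move=> w_ge0 w2_le3.
have w4_ln : w ^+ 4 * ln (w ^+ 4) <= 4 * w ^+ 4 * (w - 1).
  have [->|w_neq0] := eqVneq w 0; first by rewrite expr0n !(mul0r, mulr0).
  have w_gt0 : 0 < w by rewrite lt_def w_neq0.
  rewrite lnXn // -mulr_natr.
  have := ln_le_subr1 w_gt0; have := exprn_ge0 4 w_ge0; nra.
have gap_ge0 : 0 <= 2 * (w - 1) ^+ 2 * (2 * w * (3 - w ^+ 2) + (w - 1) ^+ 2 + 1).
  have := sqr_ge0 (w - 1); have : 0 <= 2 * w * (3 - w ^+ 2) by nra.
  nra.
have gapE : 5 * (w ^+ 2 - 1) ^+ 2 - (4 * w ^+ 4 * (w - 1) - w ^+ 4 + 1)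
    = 2 * (w - 1) ^+ 2 * (2 * w * (3 - w ^+ 2) + (w - 1) ^+ 2 + 1) by ring.
lra.
Qed.

Lemma relent_ratio_le_small t : 0 <= t -> t <= 9 ->
  t * ln t - t + 1 <= 5 * (Num.sqrt t - 1) ^+ 2.
Proof.
move=> t_ge0 t_le9; set w := Num.sqrt (Num.sqrt t).
have w_ge0 : 0 <= w := sqrtr_ge0 _.
have sqrt_tE : Num.sqrt t = w ^+ 2 by rewrite sqr_sqrtr ?sqrtr_ge0.
have tE : t = w ^+ 4 by rewrite -[LHS]sqr_sqrtr // sqrt_tE -exprM.
rewrite sqrt_tE tE; apply: quartic_relent_le => //.
have : w ^+ 2 * w ^+ 2 <= 9 by rewrite -exprD -tE.
have := exprn_ge0 2 w_ge0; nra.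
Qed.

Lemma relent_ratio_le_large M t : 9 <= t -> t <= M ->
  t * ln t - t + 1 <= 9 / 4 * ln M * (Num.sqrt t - 1) ^+ 2.
Proof.
move=> t_ge9 t_leM; set S := Num.sqrt t.
have S2 : S ^+ 2 = t by rewrite sqr_sqrtr //; lra.
have S_ge0 : 0 <= S := sqrtr_ge0 _.
have S_ge3 : 3 <= S by nra.
have lnt_ge0 : 0 <= ln t by apply: ln_ge0; lra.
have lnt_le : ln t <= ln M by rewrite ler_ln // posrE; lra.
have tlnt_le : t * ln t <= t * ln M by rewrite ler_wpM2l //; lra.
have S1_ge : 4 / 9 * t <= (S - 1) ^+ 2 by nra.
have := le_trans lnt_ge0 lnt_le; nra.
Qed.

Definition kl_hellinger_factor M : R := 16 / 3 + 8 / 3 * ln M.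

Lemma relent_ratio_le M t : 1 <= M -> 0 <= t -> t <= M ->
  t * ln t - t + 1 <= kl_hellinger_factor M * (Num.sqrt t - 1) ^+ 2.
Proof.
move=> M_ge1 t_ge0 t_leM; rewrite /kl_hellinger_factor.
have := ln_ge0 M_ge1; have := sqr_ge0 (Num.sqrt t - 1).
have [t_le9|t_gt9] := lerP t 9.
- have := relent_ratio_le_small t_ge0 t_le9; nra.
- have := relent_ratio_le_large (ltW t_gt9) t_leM; nra.
Qed.

Lemma relent_le_hellinger M p q : 1 <= M -> 0 <= p -> 0 < q -> p <= M * q ->
  p * ln p - p * ln q - p + q
    <= kl_hellinger_factor M * (Num.sqrt p - Num.sqrt q) ^+ 2.
Proof.
move=> M_ge1 p_ge0 q_gt0 pMq.
have ratio_ge0 : 0 <= p / q by rewrite divr_ge0 // ltW.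
have ratio_le : p / q <= M by rewrite ler_pdivrMr.
have lhsE : p * ln p - p * ln q - p + q = q * (p / q * ln (p / q) - p / q + 1).
  have [->|p_neq0] := eqVneq p 0; first by rewrite !(mul0r, mulr0); ring.
  have p_gt0 : 0 < p by rewrite lt_def p_neq0.
  by rewrite ln_div ?posrE //; field; rewrite gt_eqF.
have rhsE : (Num.sqrt p - Num.sqrt q) ^+ 2 = q * (Num.sqrt (p / q) - 1) ^+ 2.
  rewrite sqrtrM // sqrtrV ?ltW // -{2}[q]sqr_sqrtr ?ltW //.
  by field; rewrite gt_eqF // sqrtr_gt0.
by rewrite lhsE rhsE mulrCA ler_wpM2l ?(ltW q_gt0) //; exact: relent_ratio_le.
Qed.

Definition affinity d (c : 'I_d -> 'I_d -> R) (p q : 'I_d -> R) : R :=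
  \sum_i \sum_j c i j * (Num.sqrt (p i) * Num.sqrt (q j)).

Section DoublyStochastic.
Variables (d : nat) (c : 'I_d -> 'I_d -> R).
Hypothesis c_ge0 : forall i j, 0 <= c i j.
Hypothesis c_row : forall i, \sum_j c i j = 1.
Hypothesis c_col : forall j, \sum_i c i j = 1.

Lemma sum_row_weighted (f : 'I_d -> R) : \sum_i \sum_j c i j * f i = \sum_i f i.
Proof. by apply: eq_bigr => i _; rewrite -mulr_suml c_row mul1r. Qed.

Lemma sum_col_weighted (g : 'I_d -> R) : \sum_i \sum_j c i j * g j = \sum_j g j.
Proof.
by rewrite exchange_big; apply: eq_bigr => j _; rewrite -mulr_suml c_col mul1r.
Qed.

Lemma sum_weighted_split k a (f g : 'I_d -> R) (h : 'I_d -> 'I_d -> R) :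
  \sum_i \sum_j c i j * (k * (f i + g j - a * h i j))
    = k * (\sum_i f i + \sum_j g j - a * \sum_i \sum_j c i j * h i j).
Proof.
rewrite -(sum_row_weighted f) -(sum_col_weighted g) [a * _]mulr_sumr.
rewrite -big_split -sumrB mulr_sumr; apply: eq_bigr => i _ /=.
rewrite [a * _]mulr_sumr -big_split -sumrB mulr_sumr; apply: eq_bigr => j _ /=.
ring.
Qed.

Lemma relent_le_hellinger_weighted M (p q : 'I_d -> R) : 1 <= M ->
  (forall i, 0 <= p i) -> (forall j, 0 < q j) -> (forall i j, p i <= M * q j) ->
  \sum_i p i * ln (p i) - \sum_i \sum_j c i j * (p i * ln (q j))
      - \sum_i p i + \sum_j q j
    <= kl_hellinger_factor M * (\sum_i p i + \sum_j q j - 2 * affinity c p q).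
Proof.
move=> M_ge1 p_ge0 q_gt0 pMq.
(* The unit factors put both sides in the shape of [sum_weighted_split]. *)
have summed : \sum_i \sum_j
      c i j * (1 * ((p i * ln (p i) - p i) + q j - 1 * (p i * ln (q j))))
    <= \sum_i \sum_j c i j * (kl_hellinger_factor M
                  * (p i + q j - 2 * (Num.sqrt (p i) * Num.sqrt (q j)))).
  apply: ler_sum => i _; apply: ler_sum => j _; rewrite ler_wpM2l // mul1r.
  have sqE : (Num.sqrt (p i) - Num.sqrt (q j)) ^+ 2
      = p i + q j - 2 * (Num.sqrt (p i) * Num.sqrt (q j)).
    by rewrite sqrrB !sqr_sqrtr ?(ltW (q_gt0 j)) // mulr2n mulrDl mul1r; ring.
  have := relent_le_hellinger M_ge1 (p_ge0 i) (q_gt0 j) (pMq i j).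
  by rewrite sqE; lra.
by move: summed; rewrite !sum_weighted_split sumrB /affinity; lra.
Qed.

Lemma affinity_ge_scaled y (p s q : 'I_d -> R) : 0 <= y ->
  (forall j, 0 <= s j) -> (forall j, y ^+ 2 * s j <= q j) ->
  y * affinity c p s <= affinity c p q.
Proof.
move=> y_ge0 s_ge0 ysq; rewrite /affinity mulr_sumr; apply: ler_sum => i _.
rewrite mulr_sumr; apply: ler_sum => j _.
rewrite mulrCA ler_wpM2l // mulrCA ler_wpM2l ?sqrtr_ge0 //.
have ys_ge0 : 0 <= y ^+ 2 * s j by rewrite mulr_ge0 ?sqr_ge0.
have -> : y = Num.sqrt (y ^+ 2) by rewrite sqrtr_sqr ger0_norm.
by rewrite -sqrtrM ?sqr_ge0 // ler_sqrt // (le_trans ys_ge0).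
Qed.

End DoublyStochastic.

Lemma two_sub_cube_sqrt_le x : 0 <= x -> x <= 1 ->
  2 - 2 * (Num.sqrt (1 - x) * (1 - x)) <= 3 * x.
Proof.
move=> x_ge0 x_le1; set y := Num.sqrt (1 - x).
have y_ge0 : 0 <= y := sqrtr_ge0 _.
have y2 : y ^+ 2 = 1 - x by rewrite sqr_sqrtr //; lra.
have : 0 <= (y - 1) ^+ 2 * (2 * y + 1) by apply: mulr_ge0; [exact: sqr_ge0 | lra].
rewrite -y2; nra.
Qed.

Lemma classical_kl_bound d (c : 'I_d -> 'I_d -> R) (p s : 'I_d -> R) eps :
  (0 < d)%N ->
  (forall i j, 0 <= c i j) ->
  (forall i, \sum_j c i j = 1) -> (forall j, \sum_i c i j = 1) ->
  (forall i, 0 <= p i) -> \sum_i p i = 1 ->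
  (forall j, 0 <= s j) -> \sum_j s j = 1 ->
  0 < eps -> eps <= 2 ->
  2 - 2 * affinity c p s <= eps ->
  \sum_i p i * ln (p i)
      - \sum_i \sum_j c i j * (p i * ln ((1 - eps / 2) * s j + eps / 2 / d%:R))
    <= 4 * eps * (2 + ln (2 * d%:R / eps)).
Proof.
move=> d_gt0 c_ge0 c_row c_col p_ge0 p_sum s_ge0 s_sum eps_gt0 eps_le2 hell.
have x_gt0 : 0 < eps / 2 by lra.
have x_le1 : eps / 2 <= 1 by lra.
set x := eps / 2 in x_gt0 x_le1 hell *; set M := 2 * d%:R / eps.
pose q j := (1 - x) * s j + x / d%:R.
have d_pos : 0 < d%:R :> R by rewrite ltr0n.
have q_ge j : x / d%:R <= q j by rewrite /q lerDr mulr_ge0 // subr_ge0.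
have q_gt0 j : 0 < q j := lt_le_trans (divr_gt0 x_gt0 d_pos) (q_ge j).
have q_sum : \sum_j q j = 1.
  rewrite big_split /= -mulr_sumr s_sum sumr_const card_ord mulr1.
  by rewrite -[_ *+ d]mulr_natr divfK ?gt_eqF // subrK.
have M_ge1 : 1 <= M.
  have : 1 <= d%:R :> R by rewrite ler1n.
  by rewrite /M ler_pdivlMr // mul1r; lra.
have pMq i j : p i <= M * q j.
  have p_le1 : p i <= 1 by rewrite -p_sum (bigD1 i) //= lerDl sumr_ge0.
  have Mx : M * (x / d%:R) = 1 by rewrite /M /x; field; rewrite ?gt_eqF.
  by rewrite (le_trans p_le1) // -Mx ler_wpM2l // (le_trans _ M_ge1).
have q_ge_scaled j : Num.sqrt (1 - x) ^+ 2 * s j <= q j.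
  by rewrite sqr_sqrtr ?subr_ge0 // /q lerDl ltW // divr_gt0.
have hell_q : 1 + 1 - 2 * affinity c p q <= 3 * x.
  have := affinity_ge_scaled c_ge0 p (sqrtr_ge0 (1 - x)) s_ge0 q_ge_scaled.
  have aff_ps : 1 - x <= affinity c p s by rewrite /x; lra.
  have := ler_wpM2l (sqrtr_ge0 (1 - x)) aff_ps.
  have := two_sub_cube_sqrt_le (ltW x_gt0) x_le1; lra.
have K_ge0 : 0 <= kl_hellinger_factor M.
  by rewrite /kl_hellinger_factor; have := ln_ge0 M_ge1; lra.
have -> : 4 * eps * (2 + ln M) = kl_hellinger_factor M * (3 * x).
  by rewrite /kl_hellinger_factor /x; field.
apply: le_trans (ler_wpM2l K_ge0 hell_q).
have := relent_le_hellinger_weighted c_ge0 c_row c_col M_ge1 p_ge0 q_gt0 pMq.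
by rewrite p_sum q_sum subrK.
Qed.

End ClassicalBound.

Section SpectralForm.
Local Set Implicit Arguments. Local Unset Strict Implicit.
Variable R : realType.
Local Notation C := R[i].
Local Open Scope sesquilinear_scope.

Lemma mxtrace1_dim_gt0 (K : nzRingType) n (A : 'M[K]_n) : \tr A = 1 -> (0 < n)%N.
Proof.
by case: n A => // A; rewrite /mxtrace big_ord0 => /eqP; rewrite eq_sym oner_eq0.
Qed.

Definition unitary_diag n (U : 'M[C]_n) (f : 'I_n -> R) : 'M[C]_n :=
  U ^t* *m diag_mx (\row_i (f i)%:C) *m U.

Lemma unitarymx_trC_mul n (U : 'M[C]_n) : U \is unitarymx -> U ^t* *m U = 1%:M.
Proof. by move=> uU; rewrite -[U ^t*]mul1mx mulmxKtV. Qed.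

Lemma diag_mx_intertwine n (W : 'M[C]_n) (a b : 'rV[C]_n) (g : C -> C) :
  W *m diag_mx a = diag_mx b *m W ->
  W *m diag_mx (map_mx g a) = diag_mx (map_mx g b) *m W.
Proof.
move=> /matrixP Wab; apply/matrixP => i j; have := Wab i j.
rewrite !mul_mx_diag !mul_diag_mx !mxE.
have [->|Wij_neq0] := eqVneq (W i j) 0; first by rewrite !(mul0r, mulr0).
move=> Wab_ij; have -> : a 0 j = b 0 i by apply: (mulfI Wij_neq0); rewrite Wab_ij mulrC.
by rewrite mulrC.
Qed.

Lemma unitary_diag_normal n (U : 'M[C]_n) f :
  U \is unitarymx -> unitary_diag U f \is normalmx.
Proof.
by move=> uU; apply/orthomx_spectral_subproof; exists (U, \row_i (f i)%:C);
  rewrite //= invmx_unitary.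
Qed.

Lemma spectral_decomposition n (A : 'M[C]_n) : A \is normalmx ->
  A = (spectralmx A) ^t* *m diag_mx (spectral_diag A) *m spectralmx A.
Proof. by move=> /orthomx_spectralP {1}->; rewrite invmx_unitary ?spectral_unitarymx. Qed.

Lemma unitary_conj_mul n (U D1 D2 : 'M[C]_n) : U \is unitarymx ->
  (U ^t* *m D1 *m U) *m (U ^t* *m D2 *m U) = U ^t* *m (D1 *m D2) *m U.
Proof. by move=> uU; rewrite !mulmxA mulmxtVK. Qed.

(* Two unitary diagonalizations of one matrix can only be intertwined by a
   matrix linking equal eigenvalues, hence they agree on every function of it. *)
Lemma unitary_diag_conj_map n (U P : 'M[C]_n) (a b : 'rV[C]_n) (g : C -> C) :
  U \is unitarymx -> P \is unitarymx ->
  P ^t* *m diag_mx b *m P = U ^t* *m diag_mx a *m U ->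
  P ^t* *m diag_mx (map_mx g b) *m P = U ^t* *m diag_mx (map_mx g a) *m U.
Proof.
move=> uU uP AE.
have intertwine : P *m U ^t* *m diag_mx a = diag_mx b *m (P *m U ^t*).
  have -> : P *m U ^t* *m diag_mx a = P *m (U ^t* *m diag_mx a *m U) *m U ^t*.
    by rewrite !mulmxA (mulmxtVK _ uU).
  by rewrite -AE !mulmxA (unitarymxP uP) mul1mx.
have -> : P ^t* *m diag_mx (map_mx g b) *m P
    = P ^t* *m (diag_mx (map_mx g b) *m (P *m U ^t*)) *m U.
  by rewrite !mulmxA (mulmxKtV _ uU).
rewrite -(diag_mx_intertwine g intertwine) !mulmxA.
by rewrite (unitarymx_trC_mul uP) mul1mx.
Qed.

Lemma mxfun_unitary_diag n (U : 'M[C]_n) (f : 'I_n -> R) (g : R -> R) :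
  U \is unitarymx -> mxfun g (unitary_diag U f) = unitary_diag U (fun i => g (f i)).
Proof.
move=> uU; rewrite /mxfun.
have := spectral_decomposition (unitary_diag_normal f uU).
have := spectral_unitarymx (unitary_diag U f).
move: (spectralmx _) (spectral_diag _) => P b uP AE.
pose G z := (g (complex.Re z))%:C.
have Gb : map_mx G b = \row_i (g (complex.Re (b 0 i)))%:C.
  by apply/matrixP => i j; rewrite !mxE ord1.
have Ga : map_mx G (\row_i (f i)%:C) = \row_i (g (f i))%:C.
  by apply/matrixP => i j; rewrite !mxE.
by have := unitary_diag_conj_map G uU uP (esym AE); rewrite Gb Ga.
Qed.

Lemma psd_hermsym n (A : 'M[C]_n) : psd A -> A \is hermsymmx.
Proof.
case=> A_adj _; apply/is_hermitianmxP.
by rewrite expr0 scale1r; move: A_adj; rewrite /adj => ->.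
Qed.

Lemma psd_diag_ge0 n (P : 'M[C]_n) (b : 'rV[C]_n) i : P \is unitarymx ->
  (forall v : 'rV[C]_n, 0 <= (v *m (P ^t* *m diag_mx b *m P) *m v ^t*) 0 0) ->
  0 <= b 0 i.
Proof.
move=> uP /(_ (delta_mx 0 i *m P)).
rewrite trmx_mul map_mxM !mulmxA !mulmxtVK // -rowE row_diag_mx -scalemxAl.
by rewrite trmx_delta map_delta_mx mul_delta_mx !mxE eqxx mulr1n mulr1.
Qed.

Lemma psd_unitary_diag n (A : 'M[C]_n) : psd A ->
  exists P p, [/\ P \is unitarymx, A = unitary_diag P p & forall i, 0 <= p i].
Proof.
move=> A_psd; have := spectral_decomposition (hermitian_normalmx (psd_hermsym A_psd)).
have := spectral_unitarymx A.
move: (spectralmx A) (spectral_diag A) => P b uP AE.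
have b_ge0 i : 0 <= b 0 i.
  by apply: psd_diag_ge0 uP _; rewrite -AE; case: A_psd.
have bE : b = \row_i (complex.Re (b 0 i))%:C.
  by apply/matrixP => i j; rewrite ord1 mxE RRe_real ?ger0_real.
exists P, (fun i => complex.Re (b 0 i)); split; first exact: uP.
- by rewrite AE {1}bE.
- by move=> i; have := b_ge0 i; rewrite lecE => /andP[].
Qed.

Lemma mxtrace_unitary_diag n (U : 'M[C]_n) f :
  U \is unitarymx -> \tr (unitary_diag U f) = (\sum_i f i)%:C.
Proof.
move=> uU; rewrite mxtrace_mulC mulmxA (unitarymxP uU) mul1mx mxtrace_diag.
by rewrite rmorph_sum; apply: eq_bigr => i _; rewrite mxE.
Qed.

Lemma unitary_diag_mul n (U : 'M[C]_n) f g : U \is unitarymx ->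
  unitary_diag U f *m unitary_diag U g = unitary_diag U (fun i => f i * g i).
Proof.
move=> uU; rewrite /unitary_diag (unitary_conj_mul _ _ uU) mulmx_diag.
suff -> : \row_j ((\row_i (f i)%:C) 0 j * (\row_i (g i)%:C) 0 j)
    = \row_j (f j * g j)%:C :> 'rV[C]_n by [].
by apply/matrixP => i j; rewrite !mxE rmorphM.
Qed.

Definition unistochastic n (W : 'M[C]_n) i j : R := complex.Re (W i j * (W i j)^*).

Lemma mulcJ_Re (z : C) : z * z^* = (complex.Re (z * z^*))%:C.
Proof. by rewrite RRe_real ?ger0_real ?mulcJ_ge0. Qed.

Lemma unistochastic_ge0 n (W : 'M[C]_n) i j : 0 <= unistochastic W i j.
Proof. by have := mulcJ_ge0 (W i j); rewrite lecE => /andP[]. Qed.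

Lemma unistochastic_row_sum n (W : 'M[C]_n) i :
  W \is unitarymx -> \sum_j unistochastic W i j = 1.
Proof.
move=> /unitarymxP /matrixP /(_ i i); rewrite !mxE eqxx mulr1n => WW.
apply: (@complexI R); rewrite rmorph_sum rmorph1 -WW.
by apply: eq_bigr => j _; rewrite !mxE mulcJ_Re.
Qed.

Lemma unistochastic_col_sum n (W : 'M[C]_n) j :
  W \is unitarymx -> \sum_i unistochastic W i j = 1.
Proof.
move=> /unitarymx_trC_mul /matrixP /(_ j j); rewrite !mxE eqxx mulr1n => WW.
apply: (@complexI R); rewrite rmorph_sum rmorph1 -WW.
by apply: eq_bigr => i _; rewrite !mxE mulrC mulcJ_Re.
Qed.

Lemma mxtrace_unitary_conj_mul n (U V D E : 'M[C]_n) :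
  \tr (U ^t* *m D *m U *m (V ^t* *m E *m V))
    = \tr (D *m (U *m V ^t*) *m E *m (U *m V ^t*) ^t*).
Proof.
have -> : U ^t* *m D *m U *m (V ^t* *m E *m V)
    = U ^t* *m (D *m (U *m V ^t*) *m E *m V) by rewrite !mulmxA.
rewrite [in LHS]mxtrace_mulC; congr (\tr _).
have -> : (U *m V ^t*) ^t* = V *m U ^t* by rewrite trmx_mul map_mxM trmxCK.
by rewrite !mulmxA.
Qed.

Lemma mulcJ_scale (a b : R) (z : C) :
  a%:C * z * b%:C * z^* = (complex.Re (z * z^*) * (a * b))%:C.
Proof.
have -> : a%:C * z * b%:C * z^* = z * z^* * (a%:C * b%:C) by ring.
by rewrite mulcJ_Re !rmorphM.
Qed.

Lemma mxtrace_unitary_diag_mul n (U V : 'M[C]_n) f g :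
  \tr (unitary_diag U f *m unitary_diag V g)
    = (\sum_i \sum_j unistochastic (U *m V ^t*) i j * (f i * g j))%:C.
Proof.
rewrite /unitary_diag mxtrace_unitary_conj_mul; move: (U *m V ^t*) => W.
rewrite /mxtrace rmorph_sum; apply: eq_bigr => i _.
rewrite mxE rmorph_sum; apply: eq_bigr => j _.
by rewrite mul_mx_diag mul_diag_mx !mxE mulcJ_scale.
Qed.

Lemma depol_unitary_diag n (Q : 'M[C]_n) (s : 'I_n -> R) x : Q \is unitarymx ->
  depol x (unitary_diag Q s) = unitary_diag Q (fun j => (1 - x) * s j + x / n%:R).
Proof.
move=> uQ; rewrite /depol /unitary_diag -(unitarymx_trC_mul uQ).
have -> : diag_mx (\row_j ((1 - x) * s j + x / n%:R)%:C)
    = (1 - x)%:C *: diag_mx (\row_j (s j)%:C) + (x / n%:R)%:C *: 1%:M.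
  apply/matrixP => i j; rewrite !mxE; case: (eqVneq i j) => [_|_] /=.
    by rewrite !mulr1n mulr1 rmorphD rmorphM.
  by rewrite !mulr0n !mulr0 addr0.
by rewrite mulmxDr mulmxDl -!scalemxAr -!scalemxAl mulmx1.
Qed.

Lemma mxtrace_sqrB n (X Y : 'M[C]_n) :
  \tr ((X - Y) *m (X - Y)) = \tr (X *m X) + \tr (Y *m Y) - 2 * \tr (X *m Y).
Proof. by rewrite mulmxBl !mulmxBr !raddfB /= (mxtrace_mulC Y X); ring. Qed.

Lemma hellinger2_unitary_diag n (U V : 'M[C]_n) (p s : 'I_n -> R) :
  U \is unitarymx -> V \is unitarymx ->
  (forall i, 0 <= p i) -> (forall j, 0 <= s j) ->
  hellinger2 (unitary_diag U p) (unitary_diag V s)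
    = (\sum_i p i + \sum_j s j - 2 * affinity (unistochastic (U *m V ^t*)) p s)%:C.
Proof.
move=> uU uV p_ge0 s_ge0.
have sqrtK (h : 'I_n -> R) : (forall i, 0 <= h i) ->
    \sum_i Num.sqrt (h i) * Num.sqrt (h i) = \sum_i h i.
  by move=> h_ge0; apply: eq_bigr => i _; rewrite -expr2 sqr_sqrtr.
rewrite /hellinger2 /mxsqrt (mxfun_unitary_diag _ _ uU) (mxfun_unitary_diag _ _ uV).
rewrite mxtrace_sqrB (unitary_diag_mul _ _ uU) (unitary_diag_mul _ _ uV).
rewrite (mxtrace_unitary_diag _ uU) (mxtrace_unitary_diag _ uV) mxtrace_unitary_diag_mul.
by rewrite (sqrtK _ p_ge0) (sqrtK _ s_ge0) /affinity; ring.
Qed.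

Lemma DKL_unitary_diag n (U V : 'M[C]_n) (p q : 'I_n -> R) :
  U \is unitarymx -> V \is unitarymx ->
  DKL (unitary_diag U p) (unitary_diag V q)
    = (\sum_i p i * ln (p i)
         - \sum_i \sum_j unistochastic (U *m V ^t*) i j * (p i * ln (q j)))%:C.
Proof.
move=> uU uV; rewrite /DKL /mxln (mxfun_unitary_diag _ _ uU) (mxfun_unitary_diag _ _ uV).
rewrite mulmxBr raddfB /= (unitary_diag_mul _ _ uU) (mxtrace_unitary_diag _ uU).
by rewrite mxtrace_unitary_diag_mul rmorphB.
Qed.

End SpectralForm.

Theorem proposition2p35 (R : realType) (d : nat) (rho sigma : 'M[R[i]]_d)
    (eps : R) :
  is_state rho -> is_state sigma ->
  0 < eps -> eps <= 2 ->
  hellinger2 rho sigma <= eps%:C ->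
  DKL rho (depol (eps / 2) sigma)
    <= (4 * eps * (2 + ln (2 * d%:R / eps)))%:C.
Proof.
move=> [rho_psd rho_tr] [sigma_psd sigma_tr] eps_gt0 eps_le2.
have d_gt0 := mxtrace1_dim_gt0 rho_tr.
have [P [p [uP rhoE p_ge0]]] := psd_unitary_diag rho_psd.
have [Q [s [uQ sigmaE s_ge0]]] := psd_unitary_diag sigma_psd.
have p_sum : \sum_i p i = 1.
  by apply: (@complexI R); rewrite rmorph1 -rho_tr rhoE (mxtrace_unitary_diag _ uP).
have s_sum : \sum_i s i = 1.
  by apply: (@complexI R); rewrite rmorph1 -sigma_tr sigmaE (mxtrace_unitary_diag _ uQ).
have uW : P *m (Q ^t*)%sesqui \is unitarymx by rewrite mul_unitarymx ?trmxC_unitary.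
rewrite rhoE sigmaE (depol_unitary_diag _ _ uQ) (DKL_unitary_diag _ _ uP uQ) lecR.
rewrite (hellinger2_unitary_diag uP uQ p_ge0 s_ge0) p_sum s_sum lecR => hell.
apply: (classical_kl_bound d_gt0 (unistochastic_ge0 _)
          (fun i => unistochastic_row_sum i uW) (fun j => unistochastic_col_sum j uW)
          p_ge0 p_sum s_ge0 s_sum eps_gt0 eps_le2).
lra.
Qed.
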